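(* Let $A\subseteq B\subseteq C$ be commutative rings with the same identity. If $A$ is a dense subring of $B$ and $B$ is a dense subring of $C$, then $A$ is a dense subring of $C$.
   Context: A subring $A$ of a ring $B$ is dense in $B$ if for every ideal $I$ of $B$ and every $b\in B\setminus \operatorname{rad}(I)$ there exists $a\in B\setminus\operatorname{rad}(I)$ with $ab\in A$. *)

(* Subrings A ⊆ B of an ambient commutative ring C are
   represented as predicates on C closed under the ring operations. *)
From mathcomp Require Import all_boot all_algebra.
Set Implicit Arguments. Unset Strict Implicit. Unset Printing Implicit Defensive.
Import GRing.Theory.
Local Open Scope ring_scope.

Section Dense.
Variable C : comPzRingType.

Definition is_subring (S : C -> Prop) : Prop :=
  [/\ S 0, S 1, (forall x y, S x -> S y -> S (x - y))
   & (forall x y, S x -> S y -> S (x * y))].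

Definition is_ideal_of (B I : C -> Prop) : Prop :=
  [/\ (forall x, I x -> B x), I 0,
      (forall x y, I x -> I y -> I (x - y))
   & (forall r x, B r -> I x -> I (r * x))].

Definition rad_in (B I : C -> Prop) (x : C) : Prop :=
  B x /\ exists n : nat, I (x ^+ n).

Definition dense_in (A B : C -> Prop) : Prop :=
  forall I : C -> Prop, is_ideal_of B I ->
  forall b, B b -> ~ rad_in B I b ->
  exists a, [/\ B a, ~ rad_in B I a & A (a * b)].

End Dense.

(* If y lies outside rad(I), then y lies outside the radical of the
   saturation (I : y^oo) restricted to S, an ideal of S; density of A in S,
   applied to that ideal, yields a with a y in A and a y outside rad(I).
   Doing this first for B in C (with c) and then for A in B (with the
   resulting multiple of c) shows that A is dense in C. *)
From mathcomp Require Import all_boot all_algebra.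
Set Implicit Arguments. Unset Strict Implicit. Unset Printing Implicit Defensive.
Import GRing.Theory.
Local Open Scope ring_scope.

Section Saturation.
Variable C : comPzRingType.
Variable I : C -> Prop.
Hypothesis idealI : is_ideal_of (fun _ : C => True) I.

Definition saturation (S : C -> Prop) (y x : C) : Prop :=
  S x /\ exists n : nat, I (x * y ^+ n).

Lemma subringX (S : C -> Prop) x n : is_subring S -> S x -> S (x ^+ n).
Proof.
move=> [_ S1 _ Smul] Sx; elim: n => [|n IHn]; first by rewrite expr0.
by rewrite exprS; apply: Smul.
Qed.

Lemma saturation_ideal (S : C -> Prop) y :
  is_subring S -> is_ideal_of S (saturation S y).
Proof.
have [_ I0 Isub Imul] := idealI.
move=> [S0 _ Ssub Smul]; split.
- by move=> x [].
- by split=> //; exists 0%N; rewrite mul0r.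
- move=> x z [Sx [n Ixn]] [Sz [m Izm]]; split; first exact: Ssub.
  exists (n + m)%N; rewrite exprD mulrBl mulrA [z * _]mulrCA.
  by apply: Isub; [rewrite mulrC; apply: Imul | apply: Imul].
- move=> r x Sr [Sx [n Ixn]]; split; first exact: Smul.
  by exists n; rewrite -mulrA; apply: Imul.
Qed.

Lemma rad_mulr x y :
  rad_in (fun _ => True) I x -> rad_in (fun _ => True) I (x * y).
Proof.
have [_ _ _ Imul] := idealI.
move=> [_ [n Ixn]]; split=> //; exists n.
by rewrite exprMn mulrC; apply: Imul.
Qed.

Lemma rad_saturation_self (S : C -> Prop) y :
  rad_in S (saturation S y) y -> rad_in (fun _ => True) I y.
Proof. by move=> [_ [k [_ [n Iyn]]]]; split=> //; exists (k + n)%N; rewrite exprD. Qed.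

Lemma rad_saturation (S : C -> Prop) x y :
  is_subring S -> S x -> rad_in (fun _ => True) I (x * y) ->
  rad_in S (saturation S y) x.
Proof.
move=> subS Sx [_ [k Ixyk]]; split=> //; exists k; split; first exact: subringX.
by exists k; rewrite -exprMn.
Qed.

Lemma dense_multiple_notin_rad (A B : C -> Prop) b :
  is_subring B -> dense_in A B -> B b -> ~ rad_in (fun _ => True) I b ->
  exists a, A (a * b) /\ ~ rad_in (fun _ => True) I (a * b).
Proof.
move=> subB denseAB Bb b_notin_rad.
have b_notin_radsat : ~ rad_in B (saturation B b) b.
  by move/rad_saturation_self.
have [a [Ba a_notin_radsat Aab]] :=
  denseAB _ (saturation_ideal b subB) b Bb b_notin_radsat.
by exists a; split=> // /(rad_saturation subB Ba).
Qed.

End Saturation.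

Theorem theorem3p2 (C : comPzRingType) (A B : C -> Prop) :
  is_subring A -> is_subring B -> (forall x, A x -> B x) ->
  dense_in A B -> dense_in B (fun _ : C => True) ->
  dense_in A (fun _ : C => True).
Proof.
move=> _ subB _ denseAB denseBC I idealI c _ c_notin_rad.
have subC : is_subring (fun _ : C => True) by [].
have [c1 [Bc1c c1c_notin_rad]] :=
  dense_multiple_notin_rad idealI subC denseBC Logic.I c_notin_rad.
have [a1 [Aa1c1c a1c1c_notin_rad]] :=
  dense_multiple_notin_rad idealI subB denseAB Bc1c c1c_notin_rad.
exists (a1 * c1); split=> //; last by rewrite -mulrA.
by apply: contra_not a1c1c_notin_rad; rewrite mulrA; apply: rad_mulr.
Qed.
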